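(* Let $U_1,\dots,U_n$ be unitary operators on a Hilbert space and let ${\bf U}=U_n U_{n-1}\cdots U_1$. Suppose each $U_i$ is split as $U_i=G_i+B_i$, where $G_i,B_i$ are bounded operators (not necessarily unitary) with $\|B_i\|\le\epsilon$, so that $\|G_i\|\le 1+\epsilon$. Fix an integer $1\le k\le n$. Expanding the product ${\bf U}=\prod_{i}(G_i+B_i)$ into the $2^n$ ordered products, let ${\bf B}$ be the sum of all those products that contain at least $k$ factors of the form $B_i$, and ${\bf G}={\bf U}-{\bf B}$. Then $$\|{\bf B}\|\le \binom{n}{k}\epsilon^k(1+\epsilon)^{n-k}.$$ If moreover every $G_i$ is unitary, then $$\|{\bf B}\|\le \binom{n}{k}\epsilon^k.$$
   Context: $\|\cdot\|$ denotes the operator norm $\|A\|=\max_{\|\psi\|=1}\|A\psi\|$. *)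

From mathcomp Require Import all_boot all_order all_algebra.
From mathcomp Require Import complex.
From mathcomp Require Import all_classical all_reals.
Import GRing.Theory Num.Theory.
Set Implicit Arguments. Unset Strict Implicit. Unset Printing Implicit Defensive.
Local Open Scope ring_scope.
Local Open Scope complex_scope.

Definition hnorm (R : realType) (V : lmodType R[i]) (inner : V -> V -> R[i]) (x : V) : R :=
  Num.sqrt (complex.Re (inner x x)).

Definition is_hilbert (R : realType) (V : lmodType R[i]) (inner : V -> V -> R[i]) : Prop :=
  [/\ (forall (a : R[i]) (x y z : V), inner (a *: x + y) z = a * inner x z + inner y z),
      (forall x y : V, inner y x = (inner x y)^*%R),
      (forall x : V, 0 <= inner x x),
      (forall x : V, inner x x = 0 -> x = 0) &
      (forall u : nat -> V,
         (forall e : R, 0 < e -> exists N : nat, forall m n : nat,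
             (N <= m)%N -> (N <= n)%N -> hnorm inner (u m - u n) < e) ->
         exists l : V, forall e : R, 0 < e -> exists N : nat, forall n : nat,
             (N <= n)%N -> hnorm inner (u n - l) < e)].

Definition bounded_op (R : realType) (V : lmodType R[i]) (inner : V -> V -> R[i])
  (A : V -> V) : Prop :=
  linear A /\ exists M : R, forall x : V, hnorm inner (A x) <= M * hnorm inner x.

Definition unitary (R : realType) (V : lmodType R[i]) (inner : V -> V -> R[i])
  (A : V -> V) : Prop :=
  [/\ linear A, (forall x y : V, inner (A x) (A y) = inner x y) &
      (forall y : V, exists x : V, A x = y)].

Definition opnorm (R : realType) (V : lmodType R[i]) (inner : V -> V -> R[i])
  (A : V -> V) : R :=
  sup [set hnorm inner (A x) | x in [set x : V | hnorm inner x = 1]]%classic.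

(* ordered product F_{n-1} o ... o F_1 o F_0 (the factor with index 0 acts first) *)
Definition ordprod (V : Type) (n : nat) (F : 'I_n -> V -> V) : V -> V :=
  foldr (fun i acc => acc \o F i) id (enum 'I_n).

(* the sum of those products in prod_i (G_i + B_i) that contain at least k factors B_i;
   S is the set of indices at which the factor B_i is chosen *)
Definition bad_part (K : pzRingType) (V : lmodType K) (n k : nat) (G B : 'I_n -> V -> V)
  : V -> V :=
  fun x => \sum_(S : {set 'I_n} | (k <= #|S|)%N)
             ordprod (fun i => if i \in S then B i else G i) x.

From mathcomp Require Import all_boot all_order all_algebra.
From mathcomp Require Import complex.
From mathcomp Require Import all_classical all_reals.
From mathcomp Require Import ring lra.
Import Order.TTheory GRing.Theory Num.Theory.
Local Open Scope ring_scope.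
Local Open Scope complex_scope.
Set Implicit Arguments. Unset Strict Implicit.

(* Expand [U = prod_i (G_i + B_i)] according to the first factor: a product
   with at least [j] bad factors either starts with [G_0] and has [j] bad
   factors among the others, or starts with [B_0] and has [j - 1] of them.
   With [||G_i|| <= c], [||B_i|| <= e] and [c >= 1], Pascal's rule then gives
   [||B|| <= C(n, j) e^j c^(n - j)] by induction on [n]; the base case [j = 0]
   is the whole product [U], an isometry.  Take [c = 1 + e] in general and
   [c = 1] when the [G_i] are unitary. *)

Definition is_inner_product (R : realType) (V : lmodType R[i])
    (inner : V -> V -> R[i]) : Prop :=
  [/\ (forall (a : R[i]) (x y z : V), inner (a *: x + y) z = a * inner x z + inner y z),
      (forall x y : V, inner y x = (inner x y)^*%R),
      (forall x : V, 0 <= inner x x) &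
      (forall x : V, inner x x = 0 -> x = 0)].

Lemma hilbert_inner_product (R : realType) (V : lmodType R[i])
    (inner : V -> V -> R[i]) :
  is_hilbert inner -> is_inner_product inner.
Proof. by case. Qed.

Section InnerProduct.
Variables (R : realType) (V : lmodType R[i]) (inner : V -> V -> R[i]).
Hypothesis HI : is_inner_product inner.

Lemma inner0l z : inner 0 z = 0.
Proof.
case: HI => innerDZ _ _ _.
by have := innerDZ (-1) z z z; rewrite scaleN1r addNr mulN1r addNr.
Qed.

Lemma inner0r z : inner z 0 = 0.
Proof. by case: HI => _ inner_conj _ _; rewrite inner_conj inner0l conjC0. Qed.

Lemma innerZl a x z : inner (a *: x) z = a * inner x z.
Proof.
case: HI => innerDZ _ _ _.
by have := innerDZ a x 0 z; rewrite addr0 inner0l addr0.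
Qed.

Lemma innerDl x y z : inner (x + y) z = inner x z + inner y z.
Proof.
case: HI => innerDZ _ _ _.
by have := innerDZ 1 x y z; rewrite scale1r mul1r.
Qed.

Lemma Re_inner_expand (p q : R) x y :
  complex.Re (inner (p%:C *: x + q%:C *: y) (p%:C *: x + q%:C *: y)) =
  p ^+ 2 * complex.Re (inner x x) + 2%:R * p * q * complex.Re (inner x y)
  + q ^+ 2 * complex.Re (inner y y).
Proof.
case: HI => _ inner_conj _ _.
set w := p%:C *: x + q%:C *: y.
rewrite innerDl !innerZl (inner_conj w x) (inner_conj w y) /w !innerDl !innerZl.
rewrite (inner_conj x y).
case: (inner x x) => a1 b1; case: (inner x y) => a2 b2; case: (inner y y) => a4 b4.
rewrite /=; ring.
Qed.

Lemma Re_inner_ge0 x : 0 <= complex.Re (inner x x).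
Proof. by case: HI => _ _ inner_ge0 _; move: (inner_ge0 x); rewrite lecE => /andP[]. Qed.

Lemma hnorm_ge0 x : 0 <= hnorm inner x.
Proof. exact: sqrtr_ge0. Qed.

Lemma hnorm_sqr x : hnorm inner x ^+ 2 = complex.Re (inner x x).
Proof. by rewrite /hnorm sqr_sqrtr // Re_inner_ge0. Qed.

Lemma hnorm0 : hnorm inner 0 = 0.
Proof. by rewrite /hnorm inner0l /= sqrtr0. Qed.

Lemma hnorm_eq0 x : hnorm inner x = 0 -> x = 0.
Proof.
case: HI => _ _ inner_ge0 inner_eq0 /eqP; rewrite /hnorm sqrtr_eq0 => Re_le0.
apply: inner_eq0; move: (inner_ge0 x) (Re_inner_ge0 x) Re_le0.
case: (inner x x) => a b; rewrite lecE /= => /andP[/eqP-> _] a_ge0 a_le0.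
by rewrite (@le_anti _ _ a 0) ?a_le0.
Qed.

Lemma hnormZ (p : R) x : hnorm inner (p%:C *: x) = `|p| * hnorm inner x.
Proof.
rewrite /hnorm; have := Re_inner_expand p 0 x x; rewrite scale0r addr0 => ->.
by rewrite expr0n /= mul0r mulr0 mul0r !addr0 sqrtrM ?sqr_ge0 // sqrtr_sqr.
Qed.

Lemma hnormN x : hnorm inner (- x) = hnorm inner x.
Proof.
have -> : - x = (-1)%:C *: x.
  by rewrite -scaleN1r; congr (_ *: _); rewrite /GRing.opp /= oppr0.
by rewrite hnormZ normrN normr1 mul1r.
Qed.

Lemma Re_inner_le x y : complex.Re (inner x y) <= hnorm inner x * hnorm inner y.
Proof.
set a := complex.Re (inner x x); set b := complex.Re (inner y y).
set r := complex.Re (inner x y).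
have a_ge0 : 0 <= a := Re_inner_ge0 x; have b_ge0 : 0 <= b := Re_inner_ge0 y.
have r2_le : r ^+ 2 <= a * b.
  have [b0|b_neq0] := eqVneq b 0.
    have y0 : y = 0 by apply: hnorm_eq0; rewrite /hnorm -/b b0 sqrtr0.
    by rewrite /r y0 inner0r /= expr0n /= mulr_ge0.
  (* the discriminant argument: expand [||b x - r y||^2 >= 0] *)
  have := Re_inner_ge0 (b%:C *: x + (- r)%:C *: y).
  rewrite Re_inner_expand -/a -/b -/r => h.
  have b_gt0 : 0 < b by rewrite lt_def b_neq0 b_ge0.
  have : 0 <= b * (a * b - r ^+ 2).
    by rewrite (_ : b * (a * b - r ^+ 2) =
      b ^+ 2 * a + 2%:R * b * - r * r + (- r) ^+ 2 * b) //; ring.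
  by rewrite pmulr_rge0 // subr_ge0.
have : `|r| <= hnorm inner x * hnorm inner y.
  by rewrite /hnorm -sqrtrM // -sqrtr_sqr ler_sqrt // mulr_ge0.
exact/le_trans/ler_norm.
Qed.

Lemma hnormD_le x y : hnorm inner (x + y) <= hnorm inner x + hnorm inner y.
Proof.
have := Re_inner_expand 1 1 x y; rewrite !scale1r => expand.
rewrite {1}/hnorm -(ger0_norm (addr_ge0 (hnorm_ge0 x) (hnorm_ge0 y))).
rewrite -sqrtr_sqr expand ler_sqrt ?sqr_ge0 // -!hnorm_sqr.
have := Re_inner_le x y; have := hnorm_ge0 x; have := hnorm_ge0 y.
set u := hnorm inner x; set v := hnorm inner y; nra.
Qed.

Lemma opnorm_le (A : V -> V) (M : R) :
  0 <= M -> (forall x, hnorm inner (A x) <= M * hnorm inner x) ->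
  opnorm inner A <= M.
Proof.
move=> M_ge0 A_le; rewrite /opnorm.
have [[x0 x0_unit]|no_unit] := pselect (exists x, hnorm inner x = 1).
  apply: ge_sup; first by exists (hnorm inner (A x0)), x0.
  by move=> _ [x /= x_unit <-]; have := A_le x; rewrite x_unit mulr1.
(* a zero space has no unit vector, and then the supremum is [sup set0 = 0] *)
rewrite (_ : [set _ | x in _]%classic = set0) ?sup0 //.
by apply/seteqP; split=> z // [x x_unit _]; case: no_unit; exists x.
Qed.

Lemma linear_fun0 (A : V -> V) : linear A -> A 0 = 0.
Proof. by move=> A_lin; have := A_lin (-1) 0 0; rewrite scaleN1r addNr => ->; rewrite scaleN1r addNr. Qed.

Lemma linear_funZ (A : V -> V) a y : linear A -> A (a *: y) = a *: A y.
Proof. by move=> A_lin; have := A_lin a y 0; rewrite !addr0 linear_fun0 // addr0. Qed.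

Lemma linear_funD (A : V -> V) y z : linear A -> A (y + z) = A y + A z.
Proof. by move=> A_lin; have := A_lin 1 y z; rewrite !scale1r. Qed.

Lemma hnorm_le_opnorm (A : V -> V) :
  bounded_op inner A -> forall y, hnorm inner (A y) <= opnorm inner A * hnorm inner y.
Proof.
case=> A_lin [M A_le] y.
have [y_norm0|y_norm_neq0] := eqVneq (hnorm inner y) 0.
  by rewrite (hnorm_eq0 y_norm0) linear_fun0 // hnorm0 mulr0.
set s := hnorm inner y in y_norm_neq0 *.
have s_gt0 : 0 < s by rewrite lt_def y_norm_neq0 hnorm_ge0.
have sV_ge0 : 0 <= s^-1 by rewrite invr_ge0 ltW.
set z := (s^-1)%:C *: y.
have z_unit : hnorm inner z = 1 by rewrite hnormZ ger0_norm // mulVf.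
have Az_le : hnorm inner (A z) <= opnorm inner A.
  apply: ub_le_sup; last by exists z.
  by exists M => _ [x /= x_unit <-]; have := A_le x; rewrite x_unit mulr1.
move: Az_le; rewrite linear_funZ // hnormZ ger0_norm //.
by move/(ler_wpM2l (ltW s_gt0)); rewrite mulrA mulfV // mul1r mulrC.
Qed.

Lemma hnorm_unitary (A : V -> V) y :
  unitary inner A -> hnorm inner (A y) = hnorm inner y.
Proof. by case=> _ A_inner _; rewrite /hnorm A_inner. Qed.

End InnerProduct.

Lemma ordprod0 (T : Type) (F : 'I_0 -> T -> T) x : ordprod F x = x.
Proof. by rewrite /ordprod (size0nil (size_enum_ord 0)). Qed.

Lemma ordprodS (T : Type) n (F : 'I_n.+1 -> T -> T) x :
  ordprod F x = ordprod (fun i => F (lift ord0 i)) (F ord0 x).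
Proof. by rewrite /ordprod enum_ordSl /= foldr_map. Qed.

Lemma eq_ordprod (T : Type) n (F F' : 'I_n -> T -> T) x :
  (forall i y, F i y = F' i y) -> ordprod F x = ordprod F' x.
Proof.
move=> eqF; rewrite /ordprod; elim: (enum 'I_n) x => [|i s IHs] x //=.
by rewrite eqF IHs.
Qed.

Lemma ordprod_additive (V : nmodType) n (F : 'I_n -> V -> V) :
  (forall i y z, F i (y + z) = F i y + F i z) ->
  forall y z, ordprod F (y + z) = ordprod F y + ordprod F z.
Proof.
elim: n F => [|n IHn] F F_add y z; first by rewrite !ordprod0.
by rewrite !ordprodS F_add IHn // => i; apply: F_add.
Qed.

Lemma ordprod_isometry (T S : Type) (N : T -> S) n (F : 'I_n -> T -> T) :
  (forall i y, N (F i y) = N y) -> forall x, N (ordprod F x) = N x.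
Proof.
elim: n F => [|n IHn] F F_iso x; first by rewrite ordprod0.
by rewrite ordprodS IHn ?F_iso // => i; apply: F_iso.
Qed.

Definition lift0_set n (S : {set 'I_n}) : {set 'I_n.+1} := [set lift ord0 i | i in S].

Lemma mem_lift0_set n (S : {set 'I_n}) i : (lift ord0 i \in lift0_set S) = (i \in S).
Proof. exact/mem_imset/lift_inj. Qed.

Lemma ord0_notin_lift0_set n (S : {set 'I_n}) : ord0 \notin lift0_set S.
Proof. by apply/imsetP => -[i _ /eqP]; rewrite (negbTE (neq_lift _ _)). Qed.

Lemma mem_setU1_lift0_set n (S : {set 'I_n}) i :
  (lift ord0 i \in ord0 |: lift0_set S) = (i \in S).
Proof. by rewrite !inE eq_sym (negbTE (neq_lift _ _)) mem_lift0_set. Qed.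

Lemma card_lift0_set n (S : {set 'I_n}) : #|lift0_set S| = #|S|.
Proof. exact/card_imset/lift_inj. Qed.

Lemma lift0_setK n (S : {set 'I_n.+1}) :
  ord0 \notin S -> lift0_set [set i | lift ord0 i \in S] = S.
Proof.
move=> S0; apply/setP => j; case: (unliftP ord0 j) => [i ->|->].
  by rewrite mem_lift0_set inE.
by rewrite (negbTE S0) (negbTE (ord0_notin_lift0_set _)).
Qed.

Lemma sum_set_ord0 (M : nmodType) n (P : pred {set 'I_n.+1}) (F : {set 'I_n.+1} -> M) :
  \sum_(S | P S) F S =
  \sum_(S : {set 'I_n} | P (lift0_set S)) F (lift0_set S) +
  \sum_(S : {set 'I_n} | P (ord0 |: lift0_set S)) F (ord0 |: lift0_set S).
Proof.
rewrite (bigID (fun S : {set _} => ord0 \in S)) /= addrC.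
have unliftK (S : {set 'I_n}) : [set i | lift ord0 i \in lift0_set S] = S.
  by apply/setP => i; rewrite inE mem_lift0_set.
have unliftK1 (S : {set 'I_n}) : [set i | lift ord0 i \in ord0 |: lift0_set S] = S.
  by apply/setP => i; rewrite !inE mem_lift0_set eq_sym (negbTE (neq_lift _ _)).
congr (_ + _).
- rewrite (reindex_onto (@lift0_set n) (fun S : {set _} => [set i | lift ord0 i \in S])) /=.
    by apply: eq_bigl => S; rewrite ord0_notin_lift0_set unliftK eqxx !andbT.
  by move=> S /andP[_ S0]; apply: lift0_setK.
- rewrite (reindex_onto (fun S : {set 'I_n} => ord0 |: lift0_set S)
                        (fun S : {set _} => [set i | lift ord0 i \in S])) /=.
    by apply: eq_bigl => S; rewrite setU11 unliftK1 eqxx !andbT.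
  move=> S /andP[_ S0]; apply/setP => j; case: (unliftP ord0 j) => [i ->|->].
    by rewrite mem_setU1_lift0_set inE.
  by rewrite !inE eqxx S0.
Qed.

Lemma bad_part_recl (K : pzRingType) (V : lmodType K) n k (G B : 'I_n.+1 -> V -> V) x :
  bad_part k G B x =
  bad_part k (fun i => G (lift ord0 i)) (fun i => B (lift ord0 i)) (G ord0 x) +
  bad_part k.-1 (fun i => G (lift ord0 i)) (fun i => B (lift ord0 i)) (B ord0 x).
Proof.
rewrite /bad_part sum_set_ord0; congr (_ + _); apply: eq_big => S.
- by rewrite card_lift0_set.
- move=> _; rewrite ordprodS (negbTE (ord0_notin_lift0_set S)).
  by apply: eq_ordprod => i y; rewrite mem_lift0_set.
- by rewrite cardsU1 ord0_notin_lift0_set card_lift0_set; case: k.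
- move=> _; rewrite ordprodS setU11.
  by apply: eq_ordprod => i y; rewrite mem_setU1_lift0_set.
Qed.

Lemma bad_part_nil (K : pzRingType) (V : lmodType K) k (G B : 'I_0 -> V -> V) x :
  bad_part k G B x = if k == 0%N then x else 0.
Proof.
have set0_only (S : {set 'I_0}) : S = finset.set0 by apply/setP => -[].
rewrite /bad_part; case: k => [|k] /=.
  by rewrite (big_pred1 finset.set0) ?ordprod0 // => S; rewrite /= (set0_only S) eqxx.
by rewrite big_pred0 // => S; rewrite (set0_only S) cards0.
Qed.

Lemma bad_part0 (K : pzRingType) (V : lmodType K) n (U G B : 'I_n -> V -> V) :
  (forall i y, U i y = G i y + B i y) ->
  (forall i y z, U i (y + z) = U i y + U i z) ->
  forall x, bad_part 0 G B x = ordprod U x.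
Proof.
elim: n U G B => [|n IHn] U G B UGB U_add x; first by rewrite bad_part_nil ordprod0.
have IHn' := IHn (fun i => U (lift ord0 i)) (fun i => G (lift ord0 i))
  (fun i => B (lift ord0 i)) (fun i => UGB _) (fun i => U_add _).
by rewrite bad_part_recl /= !IHn' ordprodS -ordprod_additive ?UGB // => i; apply: U_add.
Qed.

Lemma binomial_term_pascal (R : comPzRingType) (n j : nat) (c e : R) :
  'C(n.+1, j.+1)%:R * e ^+ j.+1 * c ^+ (n.+1 - j.+1) =
  'C(n, j.+1)%:R * e ^+ j.+1 * c ^+ (n - j.+1) * c +
  'C(n, j)%:R * e ^+ j * c ^+ (n - j) * e.
Proof.
rewrite binS natrD subSS.
have [j_lt_n|n_le_j] := ltnP j n; first by rewrite -(subnSK j_lt_n) !exprS; ring.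
by rewrite bin_small ?ltnS // mul0r add0r exprS; ring.
Qed.

Lemma hnorm_bad_part_le (R : realType) (V : lmodType R[i]) (inner : V -> V -> R[i])
    (HI : is_inner_product inner) n (U G B : 'I_n -> V -> V) (c e : R) :
  1 <= c -> 0 <= e ->
  (forall i y, hnorm inner (G i y) <= c * hnorm inner y) ->
  (forall i y, hnorm inner (B i y) <= e * hnorm inner y) ->
  (forall i y, U i y = G i y + B i y) ->
  (forall i y z, U i (y + z) = U i y + U i z) ->
  (forall i y, hnorm inner (U i y) = hnorm inner y) ->
  forall j x, hnorm inner (bad_part j G B x) <=
              'C(n, j)%:R * e ^+ j * c ^+ (n - j) * hnorm inner x.
Proof.
move=> c_ge1 e_ge0; have c_ge0 : 0 <= c by apply: le_trans c_ge1.
elim: n U G B => [|n IHn] U G B G_le B_le UGB U_add U_iso [|j] x.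
- by rewrite bad_part_nil bin0 subn0 !expr0 !mul1r.
- by rewrite bad_part_nil hnorm0 // !mulr_ge0 ?hnorm_ge0 ?exprn_ge0.
- rewrite (bad_part0 UGB U_add) (ordprod_isometry U_iso) bin0 subn0 expr0 !mul1r.
  by rewrite ler_peMl ?hnorm_ge0 // exprn_ege1.
have IHn' := IHn (fun i => U (lift ord0 i)) (fun i => G (lift ord0 i))
  (fun i => B (lift ord0 i)) (fun i => G_le _) (fun i => B_le _)
  (fun i => UGB _) (fun i => U_add _) (fun i => U_iso _).
rewrite bad_part_recl binomial_term_pascal mulrDl.
apply: le_trans (hnormD_le HI _ _) _; apply: lerD.
  apply: le_trans (IHn' _ _) _; rewrite -[leRHS]mulrA ler_wpM2l ?G_le //.
  by rewrite !mulr_ge0 ?exprn_ge0.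
apply: le_trans (IHn' _ _) _; rewrite -[leRHS]mulrA ler_wpM2l ?B_le //.
by rewrite !mulr_ge0 ?exprn_ge0.
Qed.

Theorem lemma1 (R : realType) (V : lmodType R[i]) (inner : V -> V -> R[i])
  (HV : is_hilbert inner) (n k : nat) (U G B : 'I_n -> V -> V) (eps : R) :
  0 <= eps ->
  (1 <= k)%N -> (k <= n)%N ->
  (forall i, unitary inner (U i)) ->
  (forall i, bounded_op inner (G i)) ->
  (forall i, bounded_op inner (B i)) ->
  (forall i x, U i x = G i x + B i x) ->
  (forall i, opnorm inner (B i) <= eps) ->
  opnorm inner (bad_part k G B) <= 'C(n, k)%:R * eps ^+ k * (1 + eps) ^+ (n - k)
  /\ ((forall i, unitary inner (G i)) ->
      opnorm inner (bad_part k G B) <= 'C(n, k)%:R * eps ^+ k).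
Proof.
move=> eps_ge0 _ _ U_unitary G_bdd B_bdd UGB B_le.
have HI := hilbert_inner_product HV.
have U_iso i y : hnorm inner (U i y) = hnorm inner y by apply: hnorm_unitary.
have U_add i y z : U i (y + z) = U i y + U i z.
  by case: (U_unitary i) => U_lin _ _; apply: linear_funD.
have B_le' i y : hnorm inner (B i y) <= eps * hnorm inner y.
  by apply: le_trans (hnorm_le_opnorm HI (B_bdd i) y) _; rewrite ler_wpM2r ?hnorm_ge0.
have G_le i y : hnorm inner (G i y) <= (1 + eps) * hnorm inner y.
  have -> : G i y = U i y - B i y by rewrite UGB addrK.
  apply: le_trans (hnormD_le HI _ _) _.
  by rewrite hnormN // U_iso mulrDl mul1r lerD.
split.
  apply: opnorm_le => [|x]; first by rewrite !mulr_ge0 ?exprn_ge0 ?addr_ge0.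
  by apply: hnorm_bad_part_le; rewrite ?lerDl.
move=> G_unitary; apply: opnorm_le => [|x]; first by rewrite mulr_ge0 // exprn_ge0.
have G_le1 i y : hnorm inner (G i y) <= 1 * hnorm inner y.
  by rewrite mul1r hnorm_unitary.
have := hnorm_bad_part_le HI (lexx 1) eps_ge0 G_le1 B_le' UGB U_add U_iso k x.
by rewrite expr1n mulr1.
Qed.
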